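(* Let $(\widetilde R,\widetilde m,k)$ be an Artin local ring, $I\subseteq\widetilde R$ an ideal with $\widetilde m I=0$, $R=\widetilde R/I$, and let $A\subseteq\mathrm{M}_n(R)$ be a rank $d$ mold over $R$ (an $R$-subalgebra with $A$ and $\mathrm{M}_n(R)/A$ free, $\mathrm{rank}\,A=d$). Put $A_0=A\otimes_R k\subseteq\mathrm{M}_n(k)$. Choose an $R$-basis $a_1,\dots,a_d$ of $A$, lifts $S(a_i)\in\mathrm{M}_n(\widetilde R)$ of $a_i$, and lifts $S(a_ia_j)\in\bigoplus_l\widetilde R\,S(a_l)$ of $a_ia_j$. Define the $k$-linear map $c:A_0\otimes_kA_0\to(\mathrm{M}_n(k)/A_0)\otimes_kI$ by sending $\bar a_i\otimes\bar a_j$ (with $\bar a_i=a_i\bmod\widetilde m$) to the class of $S(a_ia_j)-S(a_i)S(a_j)\in\mathrm{M}_n(I)=\mathrm{M}_n(k)\otimes_kI$. Then $c$ is a Hochschild $2$-cocycle, its class $[c]\in H^2(A_0,(\mathrm{M}_n(k)/A_0)\otimes_kI)$ does not depend on the choices of basis and lifts, and there exists a rank $d$ mold $\widetilde A\subseteq\mathrm{M}_n(\widetilde R)$ over $\widetilde R$ with $\widetilde A\otimes_{\widetilde R}R=A$ if and only if $[c]=0$.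
   Context: $(\mathrm{M}_n(k)/A_0)\otimes_kI$ is an $A_0$-bimodule by $a(\overline X\otimes x)b=\overline{aXb}\otimes x$; $I$ is a finite-dimensional $k$-vector space since $\widetilde mI=0$. Hochschild cohomology $H^2$ is computed by the bar complex $C^p(A_0,M)=\mathrm{Hom}_k(A_0^{\otimes p},M)$ with the standard Hochschild differential. *)

From HB Require Import structures.
From mathcomp Require Import all_boot all_order all_algebra.
Set Implicit Arguments. Unset Strict Implicit. Unset Printing Implicit Defensive.
Import GRing.Theory.
Local Open Scope ring_scope.

Definition is_ideal (T : comPzRingType) (J : T -> Prop) : Prop :=
  J 0 /\ (forall x y, J x -> J y -> J (x + y)) /\ (forall r x, J x -> J (r * x)).

Definition artinian (T : comPzRingType) : Prop :=
  forall J : nat -> T -> Prop, (forall i, is_ideal (J i)) ->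
    (forall i x, J i.+1 x -> J i x) ->
    exists N, forall i, (N <= i)%N -> forall x, J i x <-> J N x.

Definition is_subalg (T : comPzRingType) (n : nat) (A : 'M[T]_n -> Prop) : Prop :=
  A 1%:M /\ (forall x y, A x -> A y -> A (x + y)) /\
  (forall (r : T) x, A x -> A (r *: x)) /\ (forall x y, A x -> A y -> A (x *m y)).

Definition is_basis_of (T : comPzRingType) (n d : nat) (A : 'M[T]_n -> Prop)
    (a : 'I_d -> 'M[T]_n) : Prop :=
  (forall i, A (a i)) /\
  (forall x, A x -> exists r : 'I_d -> T, x = \sum_i r i *: a i) /\
  (forall r : 'I_d -> T, \sum_i r i *: a i = 0 -> forall i, r i = 0).

(* M_n(T)/A is free: the classes of some family b form a basis of the quotient. *)
Definition quotient_free (T : comPzRingType) (n : nat) (A : 'M[T]_n -> Prop) : Prop :=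
  exists e (b : 'I_e -> 'M[T]_n),
    (forall x, exists r : 'I_e -> T, A (x - \sum_j r j *: b j)) /\
    (forall r : 'I_e -> T, A (\sum_j r j *: b j) -> forall j, r j = 0).

Definition mold (T : comPzRingType) (n d : nat) (A : 'M[T]_n -> Prop) : Prop :=
  is_subalg A /\ (exists a : 'I_d -> 'M[T]_n, is_basis_of A a) /\ quotient_free A.

(* ---------- The Hochschild setting ----------
   Rt = \widetilde R, kap : Rt -> k the residue map (kernel = \widetilde m),
   I an ideal with \widetilde m I = 0, A0 \subseteq M_n(k).
   The coefficient bimodule (M_n(k)/A0) \otimes_k I is realised as
   M_n(I) (= M_n(k) \otimes_k I) modulo the subspace A0 \otimes_k I. *)

Definition inMI (Rt : comPzRingType) (n : nat) (I : Rt -> Prop) (Y : 'M[Rt]_n) : Prop :=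
  forall i j, I (Y i j).

(* Y \in A0 \otimes_k I \subseteq M_n(I): a finite sum of  x *: B  with x \in I and
   B a lift of an element of A0 (the element  (B mod m) \otimes x). *)
Definition inN (Rt : comPzRingType) (k : fieldType) (kap : Rt -> k) (n : nat)
    (I : Rt -> Prop) (A0 : 'M[k]_n -> Prop) (Y : 'M[Rt]_n) : Prop :=
  exists m (x : 'I_m -> Rt) (B : 'I_m -> 'M[Rt]_n),
    (forall t, I (x t)) /\ (forall t, A0 (map_mx kap (B t))) /\
    Y = \sum_t x t *: B t.

(* A 1-cochain: a k-linear map A0 -> M (represented modulo A0 \otimes I).
   The k-action on M_n(I) is  (kap r) . Y = r *: Y  (well defined as m I = 0). *)
Definition cochain1 (Rt : comPzRingType) (k : fieldType) (kap : Rt -> k) (n : nat)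
    (I : Rt -> Prop) (A0 : 'M[k]_n -> Prop) (g : 'M[k]_n -> 'M[Rt]_n) : Prop :=
  (forall x, A0 x -> inMI I (g x)) /\
  (forall (r : Rt) x x', A0 x -> A0 x' ->
     inN kap I A0 (g (kap r *: x + x') - (r *: g x + g x'))).

Definition cochain2 (Rt : comPzRingType) (k : fieldType) (kap : Rt -> k) (n : nat)
    (I : Rt -> Prop) (A0 : 'M[k]_n -> Prop) (f : 'M[k]_n -> 'M[k]_n -> 'M[Rt]_n) : Prop :=
  (forall x y, A0 x -> A0 y -> inMI I (f x y)) /\
  (forall (r : Rt) x x' y, A0 x -> A0 x' -> A0 y ->
     inN kap I A0 (f (kap r *: x + x') y - (r *: f x y + f x' y))) /\
  (forall (r : Rt) x y y', A0 x -> A0 y -> A0 y' ->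
     inN kap I A0 (f x (kap r *: y + y') - (r *: f x y + f x y'))).

(* The bimodule action of a \in A0 on M_n(I) is left/right multiplication by
   any lift of a to M_n(Rt). *)
Definition cocycle2 (Rt : comPzRingType) (k : fieldType) (kap : Rt -> k) (n : nat)
    (I : Rt -> Prop) (A0 : 'M[k]_n -> Prop) (f : 'M[k]_n -> 'M[k]_n -> 'M[Rt]_n) : Prop :=
  forall x y z (X Z : 'M[Rt]_n), A0 x -> A0 y -> A0 z ->
    map_mx kap X = x -> map_mx kap Z = z ->
    inN kap I A0 (X *m f y z - f (x *m y) z + f x (y *m z) - f x y *m Z).

Definition coboundary2 (Rt : comPzRingType) (k : fieldType) (kap : Rt -> k) (n : nat)
    (I : Rt -> Prop) (A0 : 'M[k]_n -> Prop) (f : 'M[k]_n -> 'M[k]_n -> 'M[Rt]_n) : Prop :=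
  exists g, cochain1 kap I A0 g /\
    forall x y (X Y : 'M[Rt]_n), A0 x -> A0 y ->
      map_mx kap X = x -> map_mx kap Y = y ->
      inN kap I A0 (f x y - (X *m g y - g (x *m y) + g x *m Y)).

Definition choice_data (Rt R : comPzRingType) (pi : Rt -> R) (n d : nat)
    (A : 'M[R]_n -> Prop) (a : 'I_d -> 'M[R]_n) (Sa : 'I_d -> 'M[Rt]_n)
    (Sp : 'I_d -> 'I_d -> 'M[Rt]_n) : Prop :=
  is_basis_of A a /\
  (forall i, map_mx pi (Sa i) = a i) /\
  (forall i j, map_mx pi (Sp i j) = a i *m a j) /\
  (forall i j, exists t : 'I_d -> Rt, Sp i j = \sum_l t l *: Sa l).

(* A0 = A \otimes_R k, viewed inside M_n(k) as the image of A. *)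
Definition A0_of (R : comPzRingType) (k : fieldType) (rho : R -> k) (n : nat)
    (A : 'M[R]_n -> Prop) (x : 'M[k]_n) : Prop :=
  exists a, A a /\ x = map_mx rho a.

Definition is_c_of (Rt R : comPzRingType) (k : fieldType) (kap : Rt -> k) (rho : R -> k)
    (n d : nat) (I : Rt -> Prop) (A : 'M[R]_n -> Prop)
    (a : 'I_d -> 'M[R]_n) (Sa : 'I_d -> 'M[Rt]_n) (Sp : 'I_d -> 'I_d -> 'M[Rt]_n)
    (f : 'M[k]_n -> 'M[k]_n -> 'M[Rt]_n) : Prop :=
  cochain2 kap I (A0_of rho A) f /\
  forall i j, inN kap I (A0_of rho A)
    (f (map_mx rho (a i)) (map_mx rho (a j)) - (Sp i j - Sa i *m Sa j)).

From HB Require Import structures.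
From mathcomp Require Import all_boot all_order all_algebra.
From Stdlib Require Import ClassicalEpsilon.
Import GRing.Theory.
Local Open Scope ring_scope.
Set Implicit Arguments. Unset Strict Implicit. Unset Printing Implicit Defensive.

(* The coefficient bimodule (M_n(k)/A0) (x)_k I is modelled by M_n(I) modulo
   N = A0 (x)_k I, so every identity between cochains is a congruence modulo N.
   Because m I = 0, Rt and M_n(Rt) act on M_n(I) only through their residues.

   For a lift s of a basis of A,
   N is the I-span of s and contains every Rt-combination of s lying in M_n(I); this
   makes N a sub-bimodule.  Maps that are k-linear modulo N are determined by their
   values on a basis of A0, and any family in M_n(I) is the value family of such a
   map (coordinates in a basis of M_n(k) extending the basis of A0).  Hence cocycle
   and coboundary identities need only be checked on basis vectors, where they
   become explicit computations with the lifts and their structure constants: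
   - the cochain c exists by bilinear extension of the defects S(a_i a_j) - S(a_i)S(a_j);
   - its Hochschild coboundary on (a_i, a_j, a_l) compares the two bracketings of
     a_i a_j a_l, hence lies in the span of the lifts and in M_n(I), hence in N;
   - changing the choices changes c by the coboundary of a'_j |-> S'(a'_j) - U_j,
     U_j being the lift of a'_j inside the span of the old lifts;
   - a lift At of A makes c the coboundary of a_j |-> At_j - S(a_j), and conversely
     if c = dg the corrected lifts S(a_j) + g(a_j) span a lift of A. *)

Definition preim (X Y : Type) (f : X -> Y) (hf : forall y, exists x, f x = y) (y : Y) : X :=
  proj1_sig (constructive_indefinite_description _ (hf y)).

Lemma preimK (X Y : Type) (f : X -> Y) (hf : forall y, exists x, f x = y) y :
  f (preim hf y) = y.
Proof. by rewrite /preim; case: constructive_indefinite_description. Qed.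

Lemma fun_choice (X Y : Type) (P : X -> Y -> Prop) :
  (forall x, exists y, P x y) -> exists f, forall x, P x (f x).
Proof.
move=> h; exists (fun x => proj1_sig (constructive_indefinite_description _ (h x))).
by move=> x; case: constructive_indefinite_description.
Qed.

Lemma ideal_sum (T : comPzRingType) (J : T -> Prop) m (F : 'I_m -> T) :
  is_ideal J -> (forall i, J (F i)) -> J (\sum_i F i).
Proof. by move=> [J0 [JD _]] hF; apply: big_ind. Qed.

Definition catf (X : Type) d e (a : 'I_d -> X) (b : 'I_e -> X) : 'I_(d + e) -> X :=
  fun i => match split i with inl i => a i | inr j => b j end.

Lemma catf_lshift X d e (a : 'I_d -> X) (b : 'I_e -> X) i : catf a b (lshift e i) = a i.
Proof. by rewrite /catf (unsplitK (inl _ i)). Qed.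

Lemma catf_rshift X d e (a : 'I_d -> X) (b : 'I_e -> X) j : catf a b (rshift d j) = b j.
Proof. by rewrite /catf (unsplitK (inr _ j)). Qed.

Section MatrixBases.
Variables (T : comPzRingType) (n : nat).
Local Notation M := 'M[T]_n.

Lemma sum_catf d e (a : 'I_d -> M) (b : 'I_e -> M) (r : 'I_(d + e) -> T) :
  \sum_i r i *: catf a b i =
  \sum_i r (lshift e i) *: a i + \sum_j r (rshift d j) *: b j.
Proof.
by rewrite big_split_ord /=; congr (_ + _); apply: eq_bigr => i _;
  rewrite ?catf_lshift ?catf_rshift.
Qed.

Definition mx_basis m (c : 'I_m -> M) : Prop :=
  (forall x, exists r : 'I_m -> T, x = \sum_i r i *: c i) /\
  (forall r : 'I_m -> T, \sum_i r i *: c i = 0 -> forall i, r i = 0).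

Definition span m (s : 'I_m -> M) (Y : M) : Prop :=
  exists u : 'I_m -> T, Y = \sum_i u i *: s i.

Lemma mx_basis_coef_uniq m (c : 'I_m -> M) r s :
  mx_basis c -> \sum_i r i *: c i = \sum_i s i *: c i -> forall i, r i = s i.
Proof.
move=> [_ hfree] e i; apply/eqP; rewrite -subr_eq0; apply/eqP.
apply: (hfree (fun i => r i - s i)).
by rewrite (eq_bigr (fun i => r i *: c i - s i *: c i)) ?sumrB ?e ?subrr // => j _;
  rewrite scalerBl.
Qed.

Lemma mx_expand m (c : 'I_m -> M) (lam : 'I_n -> 'I_n -> 'I_m -> T) (x : M) :
  (forall p q, x p q *: delta_mx p q = x p q *: \sum_l lam p q l *: c l) ->
  x = \sum_l (\sum_p \sum_q x p q * lam p q l) *: c l.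
Proof.
move=> hlam; rewrite {1}(matrix_sum_delta x).
transitivity (\sum_p \sum_q \sum_l (x p q * lam p q l) *: c l).
  apply: eq_bigr => p _; apply: eq_bigr => q _.
  by rewrite hlam scaler_sumr; apply: eq_bigr => l _; rewrite scalerA.
symmetry; under eq_bigr => l _ do rewrite scaler_suml.
rewrite exchange_big /=; apply: eq_bigr => p _.
under eq_bigr => l _ do rewrite scaler_suml.
by rewrite exchange_big.
Qed.

Lemma mx_basis_delta m (c : 'I_m -> M) : mx_basis c ->
  exists lam : 'I_n -> 'I_n -> 'I_m -> T,
    forall p q, delta_mx p q = \sum_l lam p q l *: c l.
Proof.
move=> [hspan _].
have hrow p : exists lp : 'I_n -> 'I_m -> T, forall q, delta_mx p q = \sum_l lp q l *: c l.
  exact: fun_choice (fun q => hspan (delta_mx p q)).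
exact: fun_choice hrow.
Qed.

Lemma mx_basis_coef_ideal m (c : 'I_m -> M) (J : T -> Prop) r :
  mx_basis c -> is_ideal J -> (forall p q, J ((\sum_i r i *: c i) p q)) ->
  forall i, J (r i).
Proof.
move=> hc hJ hz i; have [lam hlam] := mx_basis_delta hc.
have hexp := mx_expand (x := \sum_i r i *: c i) (fun p q => congr1 _ (hlam p q)).
rewrite (mx_basis_coef_uniq hc hexp i).
apply: ideal_sum => // p; apply: ideal_sum => // q.
by rewrite mulrC; apply: hJ.2.2.
Qed.

Lemma span0 m (s : 'I_m -> M) : span s 0.
Proof. by exists (fun _ => 0); rewrite big1 // => i _; rewrite scale0r. Qed.

Lemma spanD m (s : 'I_m -> M) Y Z : span s Y -> span s Z -> span s (Y + Z).
Proof.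
move=> [u ->] [v ->]; exists (fun i => u i + v i); rewrite -big_split /=.
by apply: eq_bigr => i _; rewrite scalerDl.
Qed.

Lemma spanZ m (s : 'I_m -> M) r Y : span s Y -> span s (r *: Y).
Proof.
move=> [u ->]; exists (fun i => r * u i); rewrite scaler_sumr.
by apply: eq_bigr => i _; rewrite scalerA.
Qed.

Lemma spanB m (s : 'I_m -> M) Y Z : span s Y -> span s Z -> span s (Y - Z).
Proof. by move=> hY hZ; apply: spanD => //; rewrite -scaleN1r; apply: spanZ. Qed.

Lemma span_sum m (s : 'I_m -> M) l (F : 'I_l -> M) :
  (forall i, span s (F i)) -> span s (\sum_i F i).
Proof. by move=> h; apply: big_ind => //; [exact: span0 | exact: spanD]. Qed.

Lemma span_base m (s : 'I_m -> M) i : span s (s i).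
Proof.
exists (fun j => (j == i)%:R); rewrite (bigD1 i) //= eqxx scale1r big1 ?addr0 //.
by move=> j /negbTE ->; rewrite scale0r.
Qed.

Lemma subalg0 (A : M -> Prop) : is_subalg A -> A 0.
Proof. by move=> [h1 [_ [hZ _]]]; rewrite -(scale0r 1%:M); apply: hZ. Qed.

Lemma subalgB (A : M -> Prop) x y : is_subalg A -> A x -> A y -> A (x - y).
Proof. by move=> [_ [hD [hZ _]]] hx hy; rewrite -scaleN1r; apply: hD => //; apply: hZ. Qed.

Lemma subalg_lincomb (A : M -> Prop) m (r : 'I_m -> T) x :
  is_subalg A -> (forall i, A (x i)) -> A (\sum_i r i *: x i).
Proof.
move=> hA hx; apply: big_ind; first exact: subalg0.
  by move=> ? ? ? ?; apply: hA.2.1.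
by move=> i _; apply: hA.2.2.1.
Qed.

Lemma mold_mx_basis d (A : M -> Prop) (a : 'I_d -> M) e (b : 'I_e -> M) :
  is_subalg A -> is_basis_of A a ->
  (forall x, exists r : 'I_e -> T, A (x - \sum_j r j *: b j)) ->
  (forall r : 'I_e -> T, A (\sum_j r j *: b j) -> forall j, r j = 0) ->
  mx_basis (catf a b).
Proof.
move=> hA [ha [hsp hind]] hq1 hq2; split.
  move=> x; have [r hr] := hq1 x; have [u hu] := hsp _ hr.
  exists (catf u r); rewrite sum_catf.
  under eq_bigr do rewrite catf_lshift. under [X in _ + X]eq_bigr do rewrite catf_rshift.
  by rewrite -hu subrK.
move=> r; rewrite sum_catf => h0.
have hr2 j : r (rshift d j) = 0.
  move: j; apply: hq2.
  have -> : \sum_j r (rshift d j) *: b j = - \sum_i r (lshift e i) *: a i.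
    by apply/eqP; rewrite -addr_eq0 addrC h0.
  by rewrite -scaleN1r; apply: hA.2.2.1; apply: subalg_lincomb.
have hr1 i : r (lshift e i) = 0.
  move: i; apply: hind; move: h0.
  by rewrite [X in _ + X]big1 ?addr0 // => j _; rewrite hr2 scale0r.
by move=> i; rewrite -(splitK i); case: (split i) => j /=.
Qed.

Lemma mx_basis_catf_span d e (a : 'I_d -> M) (b : 'I_e -> M) :
  mx_basis (catf a b) -> is_basis_of (span a) a /\ quotient_free (span a).
Proof.
move=> [hsp hfree]; split.
  split; first exact: span_base.
  split=> [//|r hr i]; rewrite -(catf_lshift r (fun _ : 'I_e => 0)); apply: hfree.
  rewrite sum_catf [X in _ + X]big1 ?addr0; last by move=> j _; rewrite catf_rshift scale0r.
  by rewrite -[RHS]hr; apply: eq_bigr => i' _; rewrite catf_lshift.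
exists e, b; split.
  move=> x; have [c ->] := hsp x; exists (fun j => c (rshift d j)).
  by exists (fun i => c (lshift e i)); rewrite sum_catf addrK.
move=> r [u hu] j; rewrite -(catf_rshift (fun i => - u i) r); apply: hfree.
rewrite sum_catf; under eq_bigr do rewrite catf_lshift scaleNr.
by under [X in _ + X]eq_bigr do rewrite catf_rshift; rewrite hu sumrN addNr.
Qed.

Lemma sum_scale_mul m1 m2 (r : 'I_m1 -> T) (s : 'I_m2 -> T) (X : 'I_m1 -> M) (Y : 'I_m2 -> M) :
  (\sum_l r l *: X l) *m (\sum_p s p *: Y p) = \sum_l r l *: \sum_p s p *: (X l *m Y p).
Proof.
rewrite mulmx_suml; apply: eq_bigr => l _; rewrite -scalemxAl mulmx_sumr; congr (_ *: _).
by apply: eq_bigr => p _; rewrite scalemxAr.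
Qed.

Lemma double_sum_scaleB m1 m2 (r : 'I_m1 -> T) (s : 'I_m1 -> 'I_m2 -> T)
    (X Y : 'I_m1 -> 'I_m2 -> M) :
  \sum_l r l *: \sum_p s l p *: (X l p - Y l p) =
  \sum_l r l *: \sum_p s l p *: X l p - \sum_l r l *: \sum_p s l p *: Y l p.
Proof.
rewrite -sumrB; apply: eq_bigr => l _; rewrite -scalerBr -sumrB; congr (_ *: _).
by apply: eq_bigr => p _; rewrite scalerBr.
Qed.

End MatrixBases.

Lemma mx_basis_map (T S : comPzRingType) (phi : {rmorphism T -> S}) n m
    (c : 'I_m -> 'M[T]_n) (c' : 'I_m -> 'M[S]_n) :
  (forall y, exists x, phi x = y) -> (forall i, map_mx phi (c i) = c' i) ->
  mx_basis c -> mx_basis c'.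
Proof.
move=> surj hc' hc; pose L := preim surj.
have HL y : phi (L y) = y by exact: preimK.
split.
  move=> x; have [r hr] := hc.1 (map_mx L x); exists (fun i => phi (r i)).
  have -> : x = map_mx phi (map_mx L x) by apply/matrixP => p q; rewrite !mxE HL.
  by rewrite hr map_mx_sum; apply: eq_bigr => i _; rewrite map_mxZ hc'.
move=> s hs.
have hker : is_ideal (fun t : T => phi t = 0).
  split; first by rewrite rmorph0.
  by split=> [x y hx hy|r x hx]; rewrite ?rmorphD ?rmorphM hx ?hy ?addr0 ?mulr0.
move=> i; rewrite -(HL (s i)).
apply: (mx_basis_coef_ideal (r := fun i => L (s i)) hc hker) => p q.
have : map_mx phi (\sum_i L (s i) *: c i) = 0.
  by rewrite map_mx_sum -[RHS]hs; apply: eq_bigr => j _; rewrite map_mxZ HL hc'.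
by move/matrixP=> /(_ p q); rewrite !mxE.
Qed.

Section Deformation.
Variables (Rt R : comPzRingType) (k : fieldType)
  (kap : {rmorphism Rt -> k}) (pi : {rmorphism Rt -> R}) (rho : {rmorphism R -> k})
  (I : Rt -> Prop) (n d : nat) (A : 'M[R]_n -> Prop).
Hypotheses (ksurj : forall y : k, exists x, kap x = y) (hI : is_ideal I)
  (mI0 : forall x y, kap x = 0 -> I y -> x * y = 0)
  (psurj : forall y : R, exists x, pi x = y) (ker_pi : forall x, pi x = 0 <-> I x)
  (rho_pi : forall x, rho (pi x) = kap x) (hA : is_subalg A).
Variables (a0 : 'I_d -> 'M[R]_n) (e : nat) (b : 'I_e -> 'M[R]_n).
Hypotheses (ha0 : is_basis_of A a0)
  (hb_span : forall x, exists r : 'I_e -> R, A (x - \sum_j r j *: b j))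
  (hb_free : forall r : 'I_e -> R, A (\sum_j r j *: b j) -> forall j, r j = 0).

Local Notation M := 'M[Rt]_n.
Local Notation MI := (inMI I).
Local Notation A0 := (A0_of rho A).
Local Notation N := (inN kap I A0).

Definition liftk : k -> Rt := preim ksurj.
Definition liftR : R -> Rt := preim psurj.

Lemma liftkK y : kap (liftk y) = y. Proof. exact: preimK. Qed.
Lemma liftRK y : pi (liftR y) = y. Proof. exact: preimK. Qed.

Lemma map_liftkK (x : 'M[k]_n) : map_mx kap (map_mx liftk x) = x.
Proof. by apply/matrixP => i j; rewrite !mxE liftkK. Qed.

Lemma map_liftRK (x : 'M[R]_n) : map_mx pi (map_mx liftR x) = x.
Proof. by apply/matrixP => i j; rewrite !mxE liftRK. Qed.

Lemma map_kap_pi (X : M) : map_mx kap X = map_mx rho (map_mx pi X).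
Proof. by apply/matrixP => i j; rewrite !mxE rho_pi. Qed.

Lemma rho_surj y : exists x, rho x = y.
Proof. by exists (pi (liftk y)); rewrite rho_pi liftkK. Qed.

(* Since m I = 0, Rt acts on I (and on M_n(I)) through the residue field k. *)
Lemma I_mul_kap y s s' : I y -> kap s = kap s' -> s * y = s' * y.
Proof.
move=> hy hs; apply/eqP; rewrite -subr_eq0 -mulrBl; apply/eqP; apply: mI0 => //.
by rewrite rmorphB hs subrr.
Qed.

Lemma I_mulr r x : I x -> I (x * r).
Proof. by rewrite mulrC; apply: hI.2.2. Qed.

Lemma inMI_pi (Y : M) : MI Y <-> map_mx pi Y = 0.
Proof.
split=> [h|h i j]; first by apply/matrixP => i j; rewrite !mxE; apply/ker_pi.
by apply/ker_pi; move/matrixP: h => /(_ i j); rewrite !mxE.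
Qed.

Lemma inMID (Y Z : M) : MI Y -> MI Z -> MI (Y + Z).
Proof. by move=> /inMI_pi h1 /inMI_pi h2; apply/inMI_pi; rewrite map_mxD h1 h2 addr0. Qed.
Lemma inMIB (Y Z : M) : MI Y -> MI Z -> MI (Y - Z).
Proof. by move=> /inMI_pi h1 /inMI_pi h2; apply/inMI_pi; rewrite map_mxB h1 h2 subr0. Qed.
Lemma inMIZ r (Y : M) : MI Y -> MI (r *: Y).
Proof. by move=> /inMI_pi h; apply/inMI_pi; rewrite map_mxZ h scaler0. Qed.
Lemma inMIMl (X Y : M) : MI Y -> MI (X *m Y).
Proof. by move=> /inMI_pi h; apply/inMI_pi; rewrite map_mxM h mulmx0. Qed.
Lemma inMIMr (X Y : M) : MI Y -> MI (Y *m X).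
Proof. by move=> /inMI_pi h; apply/inMI_pi; rewrite map_mxM h mul0mx. Qed.
Lemma inMI_sum m (F : 'I_m -> M) : (forall i, MI (F i)) -> MI (\sum_i F i).
Proof. by move=> h; apply/inMI_pi; rewrite map_mx_sum big1 // => i _; apply/inMI_pi. Qed.

Lemma inMI_scale_kap t t' (Y : M) : MI Y -> kap t = kap t' -> t *: Y = t' *: Y.
Proof. by move=> h ht; apply/matrixP => i j; rewrite !mxE; apply: I_mul_kap. Qed.

Lemma I_scale_kap x (B B' : M) :
  I x -> map_mx kap B = map_mx kap B' -> x *: B = x *: B'.
Proof.
move=> hx hB; apply/matrixP => i j; rewrite !mxE mulrC [x * _]mulrC.
by apply: I_mul_kap => //; move/matrixP: hB => /(_ i j); rewrite !mxE.
Qed.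

Lemma inMI_mull_kap (X X' Y : M) :
  MI Y -> map_mx kap X = map_mx kap X' -> X *m Y = X' *m Y.
Proof.
move=> hY hX; apply/matrixP => i j; rewrite !mxE; apply: eq_bigr => l _.
by apply: I_mul_kap => //; move/matrixP: hX => /(_ i l); rewrite !mxE.
Qed.

Lemma inMI_mulr_kap (X X' Y : M) :
  MI Y -> map_mx kap X = map_mx kap X' -> Y *m X = Y *m X'.
Proof.
move=> hY hX; apply/matrixP => i j; rewrite !mxE; apply: eq_bigr => l _.
rewrite mulrC [Y i l * _]mulrC; apply: I_mul_kap => //.
by move/matrixP: hX => /(_ l j); rewrite !mxE.
Qed.

Lemma inMI_mul0 (Y Z : M) : MI Y -> MI Z -> Y *m Z = 0.
Proof.
move=> hY hZ; rewrite (inMI_mulr_kap (X' := 0) hY) ?mulmx0 //.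
by rewrite map_kap_pi (proj1 (inMI_pi Z) hZ) !map_mx0.
Qed.

Lemma A0_lin r x x' : A0 x -> A0 x' -> A0 (kap r *: x + x').
Proof.
move=> [a [ha ->]] [a' [ha' ->]]; exists (pi r *: a + a'); split.
  by apply: hA.2.1 => //; apply: hA.2.2.1.
by rewrite map_mxD map_mxZ rho_pi.
Qed.

Lemma A0_mul x y : A0 x -> A0 y -> A0 (x *m y).
Proof.
by move=> [a [ha ->]] [a' [ha' ->]]; exists (a *m a'); split; [apply: hA.2.2.2|rewrite map_mxM].
Qed.

Lemma A0_0 : A0 0.
Proof. by exists 0; split; [exact: subalg0 | rewrite map_mx0]. Qed.

Lemma A0_of_A a : A a -> A0 (map_mx rho a).
Proof. by move=> ha; exists a. Qed.

Lemma A0_sum m (r : 'I_m -> Rt) (x : 'I_m -> 'M[k]_n) :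
  (forall i, A0 (x i)) -> A0 (\sum_i kap (r i) *: x i).
Proof.
move=> hx; apply: big_ind; first exact: A0_0.
  by move=> y z hy hz; rewrite -[y]scale1r -(rmorph1 kap); apply: A0_lin.
by move=> i _; rewrite -[_ *: _]addr0; apply: A0_lin => //; exact: A0_0.
Qed.

Lemma A0_span (a : 'I_d -> 'M[R]_n) x : is_basis_of A a -> A0 x ->
  exists r : 'I_d -> Rt, x = \sum_i kap (r i) *: map_mx rho (a i).
Proof.
move=> [_ [hsp _]] [a' [ha' ->]]; have [rr ->] := hsp _ ha'.
exists (fun i => liftR (rr i)); rewrite map_mx_sum; apply: eq_bigr => i _.
by rewrite map_mxZ -rho_pi liftRK.
Qed.

Definition Ispan m (s : 'I_m -> M) (Y : M) : Prop :=
  exists u : 'I_m -> Rt, (forall i, I (u i)) /\ Y = \sum_i u i *: s i.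

Lemma Ispan0 m (s : 'I_m -> M) : Ispan s 0.
Proof.
by exists (fun _ => 0); split=> [i|]; [exact: hI.1 | rewrite big1 // => i _; rewrite scale0r].
Qed.

Lemma IspanD m (s : 'I_m -> M) Y Z : Ispan s Y -> Ispan s Z -> Ispan s (Y + Z).
Proof.
move=> [u [hu ->]] [v [hv ->]]; exists (fun i => u i + v i); split=> [i|].
  by apply: hI.2.1.
by rewrite -big_split /=; apply: eq_bigr => i _; rewrite scalerDl.
Qed.

Lemma IspanZ m (s : 'I_m -> M) r Y : Ispan s Y -> Ispan s (r *: Y).
Proof.
move=> [u [hu ->]]; exists (fun i => r * u i); split=> [i|]; first by apply: hI.2.2.
by rewrite scaler_sumr; apply: eq_bigr => i _; rewrite scalerA.
Qed.

Section LiftedBasis.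
Variables (a : 'I_d -> 'M[R]_n) (s : 'I_d -> M).
Hypotheses (ha : is_basis_of A a) (hs : forall i, map_mx pi (s i) = a i).

Lemma A0_lift i : A0 (map_mx kap (s i)).
Proof. by rewrite map_kap_pi hs; apply: A0_of_A; apply: ha.1. Qed.

Lemma Ispan_residue x (B : M) : I x -> A0 (map_mx kap B) -> Ispan s (x *: B).
Proof.
move=> hx [a' [ha' hB]]; have [rr hrr] := ha.2.1 _ ha'.
exists (fun i => x * liftR (rr i)); split=> [i|]; first by apply: I_mulr.
have -> : x *: B = x *: \sum_i liftR (rr i) *: s i.
  apply: I_scale_kap => //; rewrite hB hrr !map_mx_sum; apply: eq_bigr => i _.
  by rewrite !map_mxZ map_kap_pi hs -rho_pi liftRK.
by rewrite scaler_sumr; apply: eq_bigr => i _; rewrite scalerA.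
Qed.

Lemma inN_Ispan Y : N Y -> Ispan s Y.
Proof.
move=> [m [x [B [hx [hB ->]]]]]; apply: big_ind; first exact: Ispan0.
  exact: IspanD.
by move=> t _; apply: Ispan_residue.
Qed.

Lemma Ispan_inN Y : Ispan s Y -> N Y.
Proof. by move=> [u [hu ->]]; exists d, u, s; do 2?split=> //; exact: A0_lift. Qed.

Lemma span_inMI_inN Y : span s Y -> MI Y -> N Y.
Proof.
move=> [u ->] /inMI_pi h0; apply: Ispan_inN; exists u; split=> // i.
apply/ker_pi; move: i; apply: (ha.2.2 (fun i => pi (u i))).
by rewrite -[RHS]h0 map_mx_sum; apply: eq_bigr => i _; rewrite map_mxZ hs.
Qed.

End LiftedBasis.

(* The closure properties of N are read off the lift of the fixed basis a0. *)
Definition s0 i := map_mx liftR (a0 i).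

Lemma s0_lift i : map_mx pi (s0 i) = a0 i.
Proof. exact: map_liftRK. Qed.

Lemma N0 : N 0.
Proof. by apply: (Ispan_inN ha0 s0_lift); exact: Ispan0. Qed.
Lemma ND Y Z : N Y -> N Z -> N (Y + Z).
Proof.
move=> /(inN_Ispan ha0 s0_lift) h1 /(inN_Ispan ha0 s0_lift) h2.
by apply: (Ispan_inN ha0 s0_lift); apply: IspanD.
Qed.
Lemma NZ r Y : N Y -> N (r *: Y).
Proof.
move=> /(inN_Ispan ha0 s0_lift) h; apply: (Ispan_inN ha0 s0_lift); exact: IspanZ.
Qed.
Lemma NN Y : N Y -> N (- Y).
Proof. by move=> h; rewrite -scaleN1r; apply: NZ. Qed.
Lemma NB Y Z : N Y -> N Z -> N (Y - Z).
Proof. by move=> h1 h2; apply: ND => //; apply: NN. Qed.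
Lemma N_sum m (F : 'I_m -> M) : (forall i, N (F i)) -> N (\sum_i F i).
Proof. by move=> h; apply: big_ind => //; [exact: N0 | exact: ND]. Qed.
Lemma N_single x (B : M) : I x -> A0 (map_mx kap B) -> N (x *: B).
Proof. by move=> hx hB; apply: (Ispan_inN ha0 s0_lift); apply: (Ispan_residue ha0 s0_lift). Qed.

Lemma N_mull (X Y : M) : A0 (map_mx kap X) -> N Y -> N (X *m Y).
Proof.
move=> hX /(inN_Ispan ha0 s0_lift) [u [hu ->]]; rewrite mulmx_sumr; apply: N_sum => i.
rewrite -scalemxAr; apply: N_single => //; rewrite map_mxM; apply: A0_mul => //.
exact: A0_lift ha0 s0_lift i.
Qed.

Lemma N_mulr (X Y : M) : A0 (map_mx kap X) -> N Y -> N (Y *m X).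
Proof.
move=> hX /(inN_Ispan ha0 s0_lift) [u [hu ->]]; rewrite mulmx_suml; apply: N_sum => i.
rewrite -scalemxAl; apply: N_single => //; rewrite map_mxM; apply: A0_mul => //.
exact: A0_lift ha0 s0_lift i.
Qed.

Definition eqN (Y Z : M) : Prop := N (Y - Z).

Lemma eqN_refl Y : eqN Y Y. Proof. by rewrite /eqN subrr; exact: N0. Qed.
Lemma eqN_eq Y Z : Y = Z -> eqN Y Z. Proof. by move=> ->; exact: eqN_refl. Qed.
Lemma eqN_trans Y Z W : eqN Y Z -> eqN Z W -> eqN Y W.
Proof. by move=> h1 h2; rewrite /eqN -(subrKA Z); apply: ND. Qed.
Lemma eqN_D Y1 Y2 Z1 Z2 : eqN Y1 Z1 -> eqN Y2 Z2 -> eqN (Y1 + Y2) (Z1 + Z2).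
Proof. by move=> h1 h2; rewrite /eqN opprD addrACA; apply: ND. Qed.
Lemma eqN_B Y1 Y2 Z1 Z2 : eqN Y1 Z1 -> eqN Y2 Z2 -> eqN (Y1 - Y2) (Z1 - Z2).
Proof. by move=> h1 h2; apply: eqN_D h1 _; rewrite /eqN -opprD; apply: NN. Qed.
Lemma eqN_Z r Y Z : eqN Y Z -> eqN (r *: Y) (r *: Z).
Proof. by move=> h; rewrite /eqN -scalerBr; apply: NZ. Qed.
Lemma eqN_sum m (F G : 'I_m -> M) :
  (forall i, eqN (F i) (G i)) -> eqN (\sum_i F i) (\sum_i G i).
Proof. by move=> h; rewrite /eqN -sumrB; apply: N_sum. Qed.
Lemma eqN_mull X Y Z : A0 (map_mx kap X) -> eqN Y Z -> eqN (X *m Y) (X *m Z).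
Proof. by move=> hX h; rewrite /eqN -mulmxBr; apply: N_mull. Qed.
Lemma eqN_mulr X Y Z : A0 (map_mx kap X) -> eqN Y Z -> eqN (Y *m X) (Z *m X).
Proof. by move=> hX h; rewrite /eqN -mulmxBl; apply: N_mulr. Qed.
Lemma eqN_inN Y Z : eqN Y Z -> N Z -> N Y.
Proof. by move=> h hZ; rewrite -(subrK Z Y); apply: ND. Qed.

Definition kbasis (a : 'I_d -> 'M[R]_n) i : 'M[k]_n := map_mx rho (catf a b i).

Lemma kbasisP a : is_basis_of A a -> mx_basis (kbasis a).
Proof.
move=> ha; apply: (mx_basis_map (phi := rho) rho_surj (c := catf a b)) => //.
exact: mold_mx_basis hA ha hb_span hb_free.
Qed.

Definition coordf (a : 'I_d -> 'M[R]_n) (x : 'M[k]_n) : 'I_(d + e) -> k :=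
  epsilon (inhabits (fun _ => 0)) (fun r => x = \sum_i r i *: kbasis a i).

Lemma coordfP a x : is_basis_of A a -> x = \sum_i coordf a x i *: kbasis a i.
Proof. by move=> ha; rewrite /coordf; exact: (epsilon_spec _ _ ((kbasisP ha).1 x)). Qed.

Lemma coordf_uniq a x r : is_basis_of A a ->
  x = \sum_i r i *: kbasis a i -> forall i, coordf a x i = r i.
Proof. by move=> ha hx; apply: mx_basis_coef_uniq (kbasisP ha) _; rewrite -coordfP. Qed.

Lemma coordf_lin a c x x' i : is_basis_of A a ->
  coordf a (c *: x + x') i = c * coordf a x i + coordf a x' i.
Proof.
move=> ha; apply: (coordf_uniq (r := fun i => c * coordf a x i + coordf a x' i) ha).
rewrite {1}(coordfP x ha) {1}(coordfP x' ha) scaler_sumr -big_split /=.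
by apply: eq_bigr => j _; rewrite scalerDl scalerA.
Qed.

Lemma coordf_basis a j i : is_basis_of A a ->
  coordf a (map_mx rho (a j)) i = (i == lshift e j)%:R.
Proof.
move=> ha; apply: (coordf_uniq (r := fun i => (i == lshift e j)%:R) ha).
rewrite (bigD1 (lshift e j)) //= eqxx scale1r big1 ?addr0; first by rewrite /kbasis catf_lshift.
by move=> l /negbTE ->; rewrite scale0r.
Qed.

(* The k-linear map A0 -> M_n(I) with prescribed values G i on the basis
   vectors rho(a i) (extended by 0 on the complement spanned by b). *)
Definition lift_on_basis (a : 'I_d -> 'M[R]_n) (G : 'I_d -> M) (x : 'M[k]_n) : M :=
  \sum_i liftk (coordf a x (lshift e i)) *: G i.

Lemma lift_on_basis_inMI a G x : (forall i, MI (G i)) -> MI (lift_on_basis a G x).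
Proof. by move=> h; apply: inMI_sum => i; apply: inMIZ. Qed.

Lemma lift_on_basis_lin a G r x x' : is_basis_of A a -> (forall i, MI (G i)) ->
  lift_on_basis a G (kap r *: x + x') = r *: lift_on_basis a G x + lift_on_basis a G x'.
Proof.
move=> ha hG; rewrite /lift_on_basis scaler_sumr -big_split /=; apply: eq_bigr => i _.
rewrite coordf_lin // scalerA -scalerDl; apply: inMI_scale_kap => //.
by rewrite rmorphD rmorphM !liftkK.
Qed.

Lemma lift_on_basis_basis a G j : is_basis_of A a -> (forall i, MI (G i)) ->
  lift_on_basis a G (map_mx rho (a j)) = G j.
Proof.
move=> ha hG; rewrite /lift_on_basis (bigD1 j) //= big1 ?addr0.
  by rewrite coordf_basis // eqxx (inMI_scale_kap (t' := 1)) ?scale1r // liftkK rmorph1.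
move=> i /negbTE hij; rewrite coordf_basis // (inj_eq (@lshift_inj _ _)) hij.
by rewrite (inMI_scale_kap (t' := 0)) ?scale0r // liftkK rmorph0.
Qed.

Definition linN (h : 'M[k]_n -> M) : Prop := forall r x x', A0 x -> A0 x' ->
  N (h (kap r *: x + x') - (r *: h x + h x')).

Lemma linN_exact h :
  (forall r x x', A0 x -> A0 x' -> h (kap r *: x + x') = r *: h x + h x') -> linN h.
Proof. by move=> hh r x x' hx hx'; rewrite hh // subrr; exact: N0. Qed.

Lemma linN_lift_on_basis a G : is_basis_of A a -> (forall i, MI (G i)) ->
  linN (lift_on_basis a G).
Proof. by move=> ha hG; apply: linN_exact => r x x' _ _; apply: lift_on_basis_lin. Qed.

Lemma linN_0 h : linN h -> N (h 0).
Proof.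
move=> hh; have := hh (-1) 0 0 A0_0 A0_0.
by rewrite scaler0 addr0 scaleN1r addNr subr0.
Qed.

Lemma sub_split (V : zmodType) (x y z w : V) : x - (w + y) = (x - (y + z)) + (z - w).
Proof. by rewrite !opprD !addrA subrK addrAC. Qed.

Lemma sub_pair (V : zmodType) (a1 a2 b1 b2 c1 c2 : V) :
  (a1 + a2) - ((b1 + b2) + (c1 + c2)) = (a1 - (b1 + c1)) + (a2 - (b2 + c2)).
Proof.
rewrite !opprD !addrA; congr (_ + _); rewrite addrAC -!addrA; congr (_ + _).
by rewrite addrC !addrA addrAC.
Qed.

Lemma linN_sum h m (r : 'I_m -> Rt) (x : 'I_m -> 'M[k]_n) : linN h ->
  (forall i, A0 (x i)) -> eqN (h (\sum_i kap (r i) *: x i)) (\sum_i r i *: h (x i)).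
Proof.
move=> hh; rewrite /eqN; elim: m r x => [|m IH] r x hx.
  by rewrite !big_ord0 subr0; apply: linN_0.
rewrite !big_ord_recr /= (addrC (\sum_(i < m) _)) (sub_split _ _
  (h (\sum_(i < m) kap (r (widen_ord (leqnSn m) i)) *: x (widen_ord (leqnSn m) i)))).
apply: ND; last exact: IH.
by apply: hh => //; apply: A0_sum => i; apply: hx.
Qed.

Lemma linN_reduce h (a : 'I_d -> 'M[R]_n) : linN h -> is_basis_of A a ->
  (forall i, N (h (map_mx rho (a i)))) -> forall x, A0 x -> N (h x).
Proof.
move=> hh ha hb x hx; have [r ->] := A0_span ha hx.
apply: eqN_inN (linN_sum r hh (fun i => A0_of_A (ha.1 i))) _.
by apply: N_sum => i; apply: NZ.
Qed.

Lemma linN_reduce2 (F : 'M[k]_n -> 'M[k]_n -> M) (a : 'I_d -> 'M[R]_n) :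
  (forall w, A0 w -> linN (F ^~ w)) -> (forall w, A0 w -> linN (F w)) ->
  is_basis_of A a -> (forall i j, N (F (map_mx rho (a i)) (map_mx rho (a j)))) ->
  forall x y, A0 x -> A0 y -> N (F x y).
Proof.
move=> lx ly ha hb x y hx hy.
have hrow i : forall y, A0 y -> N (F (map_mx rho (a i)) y).
  by apply: (linN_reduce _ ha) => //; apply: ly; apply: A0_of_A; apply: ha.1.
by apply: (linN_reduce (lx y hy) ha) => // i; apply: hrow.
Qed.

Lemma linN_D h1 h2 : linN h1 -> linN h2 -> linN (fun x => h1 x + h2 x).
Proof.
by move=> l1 l2 r x x' hx hx'; rewrite scalerDr sub_pair; apply: ND; [apply: l1|apply: l2].
Qed.

Lemma linN_N h : linN h -> linN (fun x => - h x).
Proof. by move=> l r x x' hx hx'; rewrite scalerN -opprD -opprD; apply: NN; apply: l. Qed.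

Lemma linN_B h1 h2 : linN h1 -> linN h2 -> linN (fun x => h1 x - h2 x).
Proof. by move=> l1 l2; apply: linN_D => //; apply: linN_N. Qed.

Lemma linN_lmul (Y : M) : MI Y -> linN (fun x => map_mx liftk x *m Y).
Proof.
move=> hY; apply: linN_exact => r x x' _ _.
rewrite (inMI_mull_kap (X' := r *: map_mx liftk x + map_mx liftk x')) //.
  by rewrite mulmxDl scalemxAl.
by rewrite map_mxD map_mxZ !map_liftkK.
Qed.

Lemma linN_rmul (Y : M) : MI Y -> linN (fun x => Y *m map_mx liftk x).
Proof.
move=> hY; apply: linN_exact => r x x' _ _.
rewrite (inMI_mulr_kap (X' := r *: map_mx liftk x + map_mx liftk x')) //.
  by rewrite mulmxDr scalemxAr.
by rewrite map_mxD map_mxZ !map_liftkK.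
Qed.

Lemma linN_lmulN (X : M) h : A0 (map_mx kap X) -> linN h -> linN (fun x => X *m h x).
Proof.
move=> hX hh r x x' hx hx'; have := N_mull hX (hh r x x' hx hx').
by rewrite mulmxBr mulmxDr scalemxAr.
Qed.

Lemma linN_rmulN (X : M) h : A0 (map_mx kap X) -> linN h -> linN (fun x => h x *m X).
Proof.
move=> hX hh r x x' hx hx'; have := N_mulr hX (hh r x x' hx hx').
by rewrite mulmxBl mulmxDl scalemxAl.
Qed.

Lemma linN_compr h y : A0 y -> linN h -> linN (fun x => h (x *m y)).
Proof. by move=> hy hh r x x' hx hx' /=; rewrite mulmxDl -scalemxAl; apply: hh; exact: A0_mul. Qed.

Lemma linN_compl h y : A0 y -> linN h -> linN (fun x => h (y *m x)).
Proof. by move=> hy hh r x x' hx hx' /=; rewrite mulmxDr -scalemxAr; apply: hh; exact: A0_mul. Qed.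

Lemma cochain2_linl f w : cochain2 kap I A0 f -> A0 w -> linN (fun x => f x w).
Proof. by move=> [_ [h _]] hw r x x' hx hx'; apply: h. Qed.

Lemma cochain2_linr f w : cochain2 kap I A0 f -> A0 w -> linN (fun y => f w y).
Proof. by move=> [_ [_ h]] hw r x x' hx hx'; apply: h. Qed.

Lemma A0_liftk x : A0 x -> A0 (map_mx kap (map_mx liftk x)).
Proof. by rewrite map_liftkK. Qed.

Definition hoch2 (f : 'M[k]_n -> 'M[k]_n -> M) (x y z : 'M[k]_n) : M :=
  map_mx liftk x *m f y z - f (x *m y) z + f x (y *m z) - f x y *m map_mx liftk z.

Section Hoch2Linear.
Variables (f : 'M[k]_n -> 'M[k]_n -> M).
Hypothesis hf : cochain2 kap I A0 f.

Lemma hoch2_lin1 y z : A0 y -> A0 z -> linN (fun x => hoch2 f x y z).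
Proof.
move=> hy hz; rewrite /hoch2; apply: linN_B; [apply: linN_D; [apply: linN_B|]|].
- by apply: linN_lmul; apply: hf.1.
- exact: (linN_compr (h := fun w => f w z) hy (cochain2_linl hf hz)).
- by apply: cochain2_linl => //; apply: A0_mul.
- by apply: linN_rmulN; [apply: A0_liftk | apply: cochain2_linl].
Qed.

Lemma hoch2_lin2 x z : A0 x -> A0 z -> linN (fun y => hoch2 f x y z).
Proof.
move=> hx hz; rewrite /hoch2; apply: linN_B; [apply: linN_D; [apply: linN_B|]|].
- by apply: linN_lmulN; [apply: A0_liftk | apply: cochain2_linl].
- exact: (linN_compl (h := fun w => f w z) hx (cochain2_linl hf hz)).
- exact: (linN_compr (h := f x) hz (cochain2_linr hf hx)).
- by apply: linN_rmulN; [apply: A0_liftk | apply: cochain2_linr].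
Qed.

Lemma hoch2_lin3 x y : A0 x -> A0 y -> linN (fun z => hoch2 f x y z).
Proof.
move=> hx hy; rewrite /hoch2; apply: linN_B; [apply: linN_D; [apply: linN_B|]|].
- by apply: linN_lmulN; [apply: A0_liftk | apply: cochain2_linr].
- by apply: cochain2_linr => //; apply: A0_mul.
- exact: (linN_compl (h := f x) hy (cochain2_linr hf hx)).
- by apply: linN_rmul; apply: hf.1.
Qed.

Lemma cocycle_of_basis (a : 'I_d -> 'M[R]_n) : is_basis_of A a ->
  (forall i j l, N (hoch2 f (map_mx rho (a i)) (map_mx rho (a j)) (map_mx rho (a l)))) ->
  cocycle2 kap I A0 f.
Proof.
move=> ha hbase x y z X Z hx hy hz hX hZ.
rewrite (inMI_mull_kap (X' := map_mx liftk x) (hf.1 y z hy hz)) ?map_liftkK //.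
rewrite (inMI_mulr_kap (X' := map_mx liftk z) (hf.1 x y hx hy)) ?map_liftkK //.
clear hX hZ; move: x hx; apply: (linN_reduce (hoch2_lin1 hy hz) ha) => i.
have hai : A0 (map_mx rho (a i)) by apply: A0_of_A; apply: ha.1.
by apply: (linN_reduce2 (F := hoch2 f _)) ha _ y z hy hz => [w hw|w hw|j l];
  [apply: hoch2_lin2 | apply: hoch2_lin3 | apply: hbase].
Qed.

End Hoch2Linear.

Definition hoch1 (g : 'M[k]_n -> M) (x y : 'M[k]_n) : M :=
  map_mx liftk x *m g y - g (x *m y) + g x *m map_mx liftk y.

Lemma coboundary_of_basis (F : 'M[k]_n -> 'M[k]_n -> M) (g : 'M[k]_n -> M)
    (a : 'I_d -> 'M[R]_n) :
  (forall w, A0 w -> linN (F ^~ w)) -> (forall w, A0 w -> linN (F w)) ->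
  cochain1 kap I A0 g -> is_basis_of A a ->
  (forall i j, N (F (map_mx rho (a i)) (map_mx rho (a j))
                  - hoch1 g (map_mx rho (a i)) (map_mx rho (a j)))) ->
  coboundary2 kap I A0 F.
Proof.
move=> lx ly [hg lg] ha hbase; exists g; split=> [//|x y X Y hx hy hX hY].
rewrite (inMI_mull_kap (X' := map_mx liftk x) (hg y hy)) ?map_liftkK ?hX //.
rewrite (inMI_mulr_kap (X' := map_mx liftk y) (hg x hx)) ?map_liftkK ?hY //.
clear hX hY; apply: (linN_reduce2 (F := fun x y => F x y - hoch1 g x y)) ha hbase x y hx hy => w hw.
  apply: linN_B; first exact: lx.
  rewrite /hoch1; apply: linN_D; [apply: linN_B|].
  - exact: linN_lmul (hg w hw).
  - exact: (linN_compr (h := g) hw lg).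
  - exact: linN_rmulN (A0_liftk hw) lg.
apply: linN_B; first exact: ly.
rewrite /hoch1; apply: linN_D; [apply: linN_B|].
- exact: linN_lmulN (A0_liftk hw) lg.
- exact: (linN_compl (h := g) hw lg).
- exact: linN_rmul (hg w hw).
Qed.

Section Choices.
Variables (a : 'I_d -> 'M[R]_n) (Sa : 'I_d -> M) (Sq : 'I_d -> 'I_d -> M).
Hypothesis hc : choice_data pi A a Sa Sq.

Lemma choice_basis : is_basis_of A a. Proof. exact: hc.1. Qed.
Lemma choice_lift i : map_mx pi (Sa i) = a i. Proof. exact: hc.2.1. Qed.
Lemma choice_kap i : map_mx kap (Sa i) = map_mx rho (a i).
Proof. by rewrite map_kap_pi choice_lift. Qed.
Lemma A0_basis i : A0 (map_mx rho (a i)).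
Proof. by apply: A0_of_A; apply: hc.1.1. Qed.
Lemma A0_choice i : A0 (map_mx kap (Sa i)).
Proof. by rewrite choice_kap; exact: A0_basis. Qed.

Definition defect i j : M := Sq i j - Sa i *m Sa j.

Lemma defect_inMI i j : MI (defect i j).
Proof. by apply/inMI_pi; rewrite map_mxB map_mxM hc.2.2.1 !choice_lift subrr. Qed.

Definition sc i j : 'I_d -> Rt :=
  proj1_sig (constructive_indefinite_description _ (hc.2.2.2 i j)).

Lemma scP i j : Sq i j = \sum_l sc i j l *: Sa l.
Proof. by rewrite /sc; case: constructive_indefinite_description. Qed.

Lemma span_Sq i j : span Sa (Sq i j).
Proof. by exists (sc i j); exact: scP. Qed.

Lemma residue_mul_basis i j : map_mx rho (a i) *m map_mx rho (a j) =
  \sum_p kap (sc i j p) *: map_mx rho (a p).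
Proof.
rewrite -map_mxM -hc.2.2.1 -map_kap_pi scP map_mx_sum; apply: eq_bigr => p _.
by rewrite map_mxZ choice_kap.
Qed.

Definition c_of (x y : 'M[k]_n) : M :=
  lift_on_basis a (fun i => lift_on_basis a (fun j => defect i j) y) x.

Lemma c_of_is_c : is_c_of kap rho I A a Sa Sq c_of.
Proof.
have ha := choice_basis.
have hrow y i : MI (lift_on_basis a (fun j => defect i j) y).
  by apply: lift_on_basis_inMI => j; apply: defect_inMI.
split; first split.
- by move=> x y _ _; apply: lift_on_basis_inMI.
- split=> [r x x' y hx hx' _|r x y y' _ _ _].
    exact: (linN_lift_on_basis ha (hrow y) r hx hx').
  have -> : c_of x (kap r *: y + y') = r *: c_of x y + c_of x y'.
    rewrite /c_of {1}/lift_on_basis scaler_sumr -big_split /=; apply: eq_bigr => i _.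
    rewrite lift_on_basis_lin //; last by move=> j; apply: defect_inMI.
    by rewrite scalerDr !scalerA mulrC.
  by rewrite subrr; exact: N0.
- move=> i j; rewrite /c_of !lift_on_basis_basis ?subrr //; first exact: N0.
  by move=> l; apply: defect_inMI.
Qed.

Lemma assoc_rearrange (V : zmodType) (P Q U W X : V) :
  (P - Q) - (U - X) + (W - P) - (X - Q) = W - U.
Proof. by rewrite !opprB !addrA [LHS](ACl (5*4*1*6*2*7*3*8)) /= addrK subrK addrK. Qed.

(* The cocycle expression of the defects on a basis triple is the difference of
   the two ways of reducing (a i a j) a l = a i (a j a l) with the structure constants. *)
Lemma defect_cocycle_identity i j l :
  Sa i *m defect j l - \sum_p sc i j p *: defect p l
    + \sum_q sc j l q *: defect i q - defect i j *m Sa l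
  = \sum_q sc j l q *: Sq i q - \sum_p sc i j p *: Sq p l.
Proof.
have e1 : \sum_p sc i j p *: defect p l = \sum_p sc i j p *: Sq p l - Sq i j *m Sa l.
  rewrite /defect; under eq_bigr do rewrite scalerBr; rewrite sumrB scP mulmx_suml.
  by congr (_ - _); apply: eq_bigr => p _; rewrite scalemxAl.
have e2 : \sum_q sc j l q *: defect i q = \sum_q sc j l q *: Sq i q - Sa i *m Sq j l.
  rewrite /defect; under eq_bigr do rewrite scalerBr; rewrite sumrB (scP j l) mulmx_sumr.
  by congr (_ - _); apply: eq_bigr => p _; rewrite scalemxAr.
by rewrite e1 e2 /defect mulmxBr mulmxBl mulmxA assoc_rearrange.
Qed.

Lemma defect_cocycle_inN i j l :
  N (Sa i *m defect j l - \sum_p sc i j p *: defect p l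
     + \sum_q sc j l q *: defect i q - defect i j *m Sa l).
Proof.
have hM : MI (Sa i *m defect j l - \sum_p sc i j p *: defect p l
    + \sum_q sc j l q *: defect i q - defect i j *m Sa l).
  apply: inMIB; [apply: inMID; [apply: inMIB|]|].
  - by apply: inMIMl; apply: defect_inMI.
  - by apply: inMI_sum => p; apply: inMIZ; apply: defect_inMI.
  - by apply: inMI_sum => p; apply: inMIZ; apply: defect_inMI.
  - by apply: inMIMr; apply: defect_inMI.
rewrite defect_cocycle_identity in hM *; apply: (span_inMI_inN choice_basis choice_lift) => //.
by apply: spanB; apply: span_sum => p; apply: spanZ; apply: span_Sq.
Qed.

Lemma c_cocycle f : is_c_of kap rho I A a Sa Sq f -> cocycle2 kap I A0 f.
Proof.
move=> [hf hval]; apply: (cocycle_of_basis hf choice_basis) => i j l.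
have hMI x y : A0 x -> A0 y -> MI (f x y) by apply: hf.1.
rewrite /hoch2 (inMI_mull_kap (X' := Sa i) (hMI _ _ (A0_basis j) (A0_basis l)));
  last by rewrite map_liftkK choice_kap.
rewrite (inMI_mulr_kap (X' := Sa l) (hMI _ _ (A0_basis i) (A0_basis j)));
  last by rewrite map_liftkK choice_kap.
apply: eqN_inN (defect_cocycle_inN i j l).
apply: eqN_B; [apply: eqN_D; [apply: eqN_B|]|].
- by apply: eqN_mull; [apply: A0_choice | apply: hval].
- rewrite residue_mul_basis; apply: eqN_trans (linN_sum _
    (cochain2_linl hf (A0_basis l)) A0_basis) _.
  by apply: eqN_sum => p; apply: eqN_Z; apply: hval.
- rewrite residue_mul_basis; apply: eqN_trans (linN_sum _
    (cochain2_linr hf (A0_basis i)) A0_basis) _.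
  by apply: eqN_sum => p; apply: eqN_Z; apply: hval.
- by apply: eqN_mulr; [apply: A0_choice | apply: hval].
Qed.

End Choices.

Lemma cochain2_expand f (u : 'I_d -> 'M[k]_n) (V : 'I_d -> 'I_d -> M) (r s : 'I_d -> Rt) :
  cochain2 kap I A0 f -> (forall l, A0 (u l)) -> (forall l p, eqN (f (u l) (u p)) (V l p)) ->
  eqN (f (\sum_l kap (r l) *: u l) (\sum_p kap (s p) *: u p))
      (\sum_l r l *: \sum_p s p *: V l p).
Proof.
move=> hf hu hV.
apply: eqN_trans (linN_sum _ (cochain2_linl hf (A0_sum s hu)) hu) _.
apply: eqN_sum => l; apply: eqN_Z.
apply: eqN_trans (linN_sum _ (cochain2_linr hf (hu l)) hu) _.
by apply: eqN_sum => p; apply: eqN_Z.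
Qed.

Lemma change_rearrange (V : zmodType) (X1 UU TU TG UG GU : V) :
  (X1 - UU) - ((TU + TG) - (UU + UG + GU)) - ((UG - TG) + GU) = X1 - TU.
Proof.
rewrite !(opprD, opprB, opprK, addrA) [LHS](ACl (1*6*2*3*7*8*4*9*5*10)) /=.
by rewrite subrK subrK addrK addrK.
Qed.

(* Writing new lifts as Sa = U + G with G in M_n(I) (so G G = 0). *)
Lemma change_identity (X1 Sq' Sai Saj Ui Uj Gi Gj TU TG : M) :
  Sai = Ui + Gi -> Saj = Uj + Gj -> Gi *m Gj = 0 -> Sq' = TU + TG ->
  (X1 - Ui *m Uj) - (Sq' - Sai *m Saj) - (Ui *m Gj - TG + Gi *m Uj) = X1 - TU.
Proof. by move=> -> -> hG ->; rewrite mulmxDl !mulmxDr hG addr0 change_rearrange. Qed.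

Section ChangeOfChoices.
Variables (a : 'I_d -> 'M[R]_n) (Sa : 'I_d -> M) (Sq : 'I_d -> 'I_d -> M)
  (a' : 'I_d -> 'M[R]_n) (Sa' : 'I_d -> M) (Sq' : 'I_d -> 'I_d -> M).
Hypotheses (hc : choice_data pi A a Sa Sq) (hc' : choice_data pi A a' Sa' Sq').

Definition old_coord j : 'I_d -> R :=
  proj1_sig (constructive_indefinite_description _
    ((choice_basis hc).2.1 _ ((choice_basis hc').1 j))).
Definition chg j l : Rt := liftR (old_coord j l).

Definition U j : M := \sum_l chg j l *: Sa l.
Definition G j : M := Sa' j - U j.

Lemma old_coordP j : a' j = \sum_l old_coord j l *: a l.
Proof. by rewrite /old_coord; case: constructive_indefinite_description. Qed.

Lemma U_lift j : map_mx pi (U j) = a' j.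
Proof.
rewrite map_mx_sum old_coordP; apply: eq_bigr => l _.
by rewrite map_mxZ liftRK (choice_lift hc).
Qed.

Lemma U_kap j : map_mx kap (U j) = map_mx rho (a' j).
Proof. by rewrite map_kap_pi U_lift. Qed.

Lemma G_inMI j : MI (G j).
Proof. by apply/inMI_pi; rewrite map_mxB (choice_lift hc') U_lift subrr. Qed.

Lemma residue_new_basis j : map_mx rho (a' j) = \sum_l kap (chg j l) *: map_mx rho (a l).
Proof.
by rewrite old_coordP map_mx_sum; apply: eq_bigr => l _; rewrite map_mxZ -rho_pi liftRK.
Qed.

Lemma change_core_inN i j :
  N ((\sum_l chg i l *: \sum_p chg j p *: defect Sa Sq l p - defect Sa' Sq' i j)
     - (U i *m G j - \sum_q sc hc' i j q *: G q + G i *m U j)).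
Proof.
set Core := (X in N X).
have hM : MI Core.
  apply: inMIB; first apply: inMIB.
  - by do 2!(apply: inMI_sum => ?; apply: inMIZ); exact: (defect_inMI hc _ _).
  - exact: (defect_inMI hc' _ _).
  apply: inMID; first apply: inMIB.
  - exact/inMIMl/G_inMI.
  - by apply: inMI_sum => q; apply/inMIZ/G_inMI.
  - exact/inMIMr/G_inMI.
have eC : Core = \sum_l chg i l *: \sum_p chg j p *: Sq l p - \sum_q sc hc' i j q *: U q.
  have eSa q : Sa' q = U q + G q by rewrite /G addrC subrK.
  rewrite /Core /defect double_sum_scaleB -sum_scale_mul.
  apply: change_identity; [exact: eSa | exact: eSa | exact: inMI_mul0 (G_inMI _) (G_inMI _)|].
  by rewrite (scP hc') -big_split; apply: eq_bigr => l _; rewrite eSa scalerDr.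
rewrite eC in hM *; apply: (span_inMI_inN (choice_basis hc) (choice_lift hc)) => //.
apply: spanB; apply: span_sum => l; apply: spanZ; apply: span_sum => p; apply: spanZ.
  exact: (span_Sq hc).
exact: span_base.
Qed.

Lemma c_change f f' : is_c_of kap rho I A a Sa Sq f -> is_c_of kap rho I A a' Sa' Sq' f' ->
  coboundary2 kap I A0 (fun x y => f x y - f' x y).
Proof.
move=> [hf hval] [hf' hval'].
have ha' := choice_basis hc'.
apply: (coboundary_of_basis (g := lift_on_basis a' G) (a := a')) => //.
- by move=> w hw; apply: linN_B; [apply: cochain2_linl hf hw | apply: cochain2_linl hf' hw].
- by move=> w hw; apply: linN_B; [apply: cochain2_linr hf hw | apply: cochain2_linr hf' hw].
- split; first by move=> x _; apply: lift_on_basis_inMI; exact: G_inMI.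
  exact: (linN_lift_on_basis ha' G_inMI).
move=> i j; rewrite /hoch1.
rewrite (inMI_mull_kap (X' := U i) (Y := lift_on_basis a' G _)) ?map_liftkK ?U_kap //;
  last exact (lift_on_basis_inMI a' _ G_inMI).
rewrite (inMI_mulr_kap (X' := U j) (Y := lift_on_basis a' G _)) ?map_liftkK ?U_kap //;
  last exact (lift_on_basis_inMI a' _ G_inMI).
rewrite !(lift_on_basis_basis _ ha' G_inMI).
apply: eqN_inN (change_core_inN i j).
apply: eqN_B; first apply: eqN_B.
- rewrite !residue_new_basis; apply: (cochain2_expand _ _ hf (A0_basis hc)) => l p.
  exact: hval.
- exact: hval'.
apply: eqN_D (eqN_refl _); apply: eqN_B (eqN_refl _) _.
rewrite (residue_mul_basis hc').
apply: eqN_trans (linN_sum _ (linN_lift_on_basis ha' G_inMI) (A0_basis hc')) _.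
by apply: eqN_sum => q; apply: eqN_eq; rewrite lift_on_basis_basis //; exact: G_inMI.
Qed.

End ChangeOfChoices.

Section BasisLift.
(* A family c in M_n(Rt) lifting a basis c' of M_n(R) is a basis of M_n(Rt):
   since m I = 0, the residues of c also span M_n(I) = M_n(k) (x) I. *)
Variables (m : nat) (c : 'I_m -> M) (c' : 'I_m -> 'M[R]_n).
Hypotheses (hc' : mx_basis c') (hlift : forall i, map_mx pi (c i) = c' i).

Lemma residue_mx_basis : mx_basis (fun i => map_mx kap (c i)).
Proof. by apply: (mx_basis_map rho_surj _ hc') => i; rewrite map_kap_pi hlift. Qed.

Lemma inMI_expand (lam : 'I_n -> 'I_n -> 'I_m -> k) (Z : M) :
  (forall p q, delta_mx p q = \sum_l lam p q l *: map_mx kap (c l)) -> MI Z ->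
  Z = \sum_l (\sum_p \sum_q Z p q * liftk (lam p q l)) *: c l.
Proof.
move=> hlam hZ; apply: mx_expand => p q; apply: I_scale_kap; first exact: hZ.
rewrite map_delta_mx hlam map_mx_sum; apply: eq_bigr => l _.
by rewrite map_mxZ liftkK.
Qed.

Lemma lift_spans Y : exists r : 'I_m -> Rt, Y = \sum_i r i *: c i.
Proof.
have [lam hlam] := mx_basis_delta residue_mx_basis.
have [s hs] := hc'.1 (map_mx pi Y).
set Y1 := Y - \sum_l liftR (s l) *: c l.
have hY1 : MI Y1.
  apply/inMI_pi; rewrite map_mxB hs map_mx_sum; apply/eqP; rewrite subr_eq0; apply/eqP.
  by apply: eq_bigr => l _; rewrite map_mxZ liftRK hlift.
exists (fun l => (\sum_p \sum_q Y1 p q * liftk (lam p q l)) + liftR (s l)).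
rewrite -[Y](subrK (\sum_l liftR (s l) *: c l)) -/Y1 {1}(inMI_expand hlam hY1).
by rewrite -big_split; apply: eq_bigr => l _; rewrite scalerDl.
Qed.

(* With lam the residue coordinates of the matrix units, the forms
   Z |-> sum_pq Z_pq liftk(lam_pq,l) are dual to the residues of c. *)
Lemma residue_dual (lam : 'I_n -> 'I_n -> 'I_m -> k) i l :
  (forall p q, delta_mx p q = \sum_l lam p q l *: map_mx kap (c l)) ->
  kap (\sum_p \sum_q c i p q * liftk (lam p q l)) = (l == i)%:R.
Proof.
move=> hlam.
have e1 := mx_expand (x := map_mx kap (c i)) (fun p q => congr1 _ (hlam p q)).
have e2 : map_mx kap (c i) = \sum_l ((l == i)%:R : k) *: map_mx kap (c l).
  by rewrite (bigD1 i) //= eqxx scale1r big1 ?addr0 // => l' /negbTE ->; rewrite scale0r.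
rewrite -(mx_basis_coef_uniq residue_mx_basis (etrans (esym e1) e2) l) rmorph_sum.
apply: eq_bigr => p _; rewrite rmorph_sum; apply: eq_bigr => q _.
by rewrite rmorphM liftkK mxE.
Qed.

Lemma lift_free (r : 'I_m -> Rt) : \sum_i r i *: c i = 0 -> forall i, r i = 0.
Proof.
move=> hr0; have [lam hlam] := mx_basis_delta residue_mx_basis.
have Ir i : I (r i).
  apply/ker_pi; move: i; apply: (hc'.2 (fun i => pi (r i))).
  have := congr1 (map_mx pi) hr0; rewrite map_mx_sum map_mx0 => h; rewrite -[RHS]h.
  by apply: eq_bigr => i _; rewrite map_mxZ hlift.
move=> l.
have h0 : \sum_i r i * (\sum_p \sum_q c i p q * liftk (lam p q l)) = 0.
  transitivity (\sum_p \sum_q (\sum_i r i *: c i) p q * liftk (lam p q l)); last first.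
    by rewrite hr0 big1 // => p _; rewrite big1 // => q _; rewrite mxE mul0r.
  transitivity (\sum_i \sum_p \sum_q r i * (c i p q * liftk (lam p q l))).
    by apply: eq_bigr => i _; rewrite mulr_sumr; apply: eq_bigr => p _; rewrite mulr_sumr.
  rewrite exchange_big /=; apply: eq_bigr => p _.
  rewrite exchange_big /=; apply: eq_bigr => q _.
  by rewrite summxE mulr_suml; apply: eq_bigr => i _; rewrite mxE mulrA.
have hdiag i : r i * (\sum_p \sum_q c i p q * liftk (lam p q l)) = r i * (l == i)%:R.
  rewrite mulrC [RHS]mulrC; apply: I_mul_kap; first exact: Ir.
  by rewrite residue_dual // rmorph_nat.
move: h0; under eq_bigr do rewrite hdiag.
rewrite (bigD1 l) //= eqxx mulr1 big1 ?addr0 // => i /negbTE hi.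
by rewrite eq_sym hi mulr0.
Qed.

Lemma lift_mx_basis : mx_basis c.
Proof. by split; [exact: lift_spans | exact: lift_free]. Qed.

End BasisLift.

(* If At is a rank d mold over Rt reducing to A, then At meets M_n(I) inside N:
   coefficients in a mold basis of an element of M_n(I) lie in I. *)
Lemma lift_inMI_inN (At : M -> Prop) W :
  mold d At -> (forall x, A x <-> exists y, At y /\ x = map_mx pi y) ->
  At W -> MI W -> N W.
Proof.
move=> [hAt [[ba hba] [e' [bq [hbq1 hbq2]]]]] hred hW hMW.
have hbasis := mold_mx_basis hAt hba hbq1 hbq2.
have [u hu] := hba.2.1 _ hW.
have eW : W = \sum_i catf u (fun _ : 'I_e' => 0) i *: catf ba bq i.
  rewrite sum_catf [X in _ + X]big1 ?addr0; last by move=> j _; rewrite catf_rshift scale0r.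
  by rewrite hu; apply: eq_bigr => i _; rewrite !catf_lshift.
rewrite hu; apply: N_sum => i; apply: N_single.
  rewrite -(catf_lshift u (fun _ : 'I_e' => 0)).
  by apply: (mx_basis_coef_ideal hbasis hI) => p q; rewrite -eW; apply: hMW.
rewrite map_kap_pi; apply: A0_of_A; apply/hred; exists (ba i); split => //; exact: hba.1.
Qed.

Lemma lift_rearrange (V : zmodType) (AA AG GA TA TG : V) :
  (TA - TG - (AA - AG - (GA - 0))) - (AG - TG + GA) = TA - AA.
Proof.
rewrite !(opprD, opprB, opprK, addrA, subr0) [LHS](ACl (1*5*2*6*3*8*4*7)) /=.
by rewrite subrK addrK addrK.
Qed.

(* Writing Sa = At' - G with G in M_n(I) (so G G = 0). *)
Lemma lift_identity (Sq Sai Saj Ai Aj Gi Gj TA TG : M) :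
  Sai = Ai - Gi -> Saj = Aj - Gj -> Gi *m Gj = 0 -> Sq = TA - TG ->
  (Sq - Sai *m Saj) - (Ai *m Gj - TG + Gi *m Aj) = TA - Ai *m Aj.
Proof. by move=> -> -> hG ->; rewrite mulmxBl !mulmxBr hG lift_rearrange. Qed.

Lemma lift_core_inN (a : 'I_d -> 'M[R]_n) (Sa : 'I_d -> M) (Sq : 'I_d -> 'I_d -> M)
    (hc : choice_data pi A a Sa Sq) (At : M -> Prop) (At' : 'I_d -> M) :
  mold d At -> (forall x, A x <-> exists y, At y /\ x = map_mx pi y) ->
  (forall j, At (At' j)) -> (forall j, map_mx pi (At' j) = a j) ->
  forall i j, N (defect Sa Sq i j - (At' i *m (At' j - Sa j)
    - \sum_q sc hc i j q *: (At' q - Sa q) + (At' i - Sa i) *m At' j)).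
Proof.
move=> hmo hred hAt' hlift i j; set Core := (X in N X).
have hG q : MI (At' q - Sa q).
  by apply/inMI_pi; rewrite map_mxB (choice_lift hc) hlift subrr.
have hM : MI Core.
  apply: inMIB; first exact: (defect_inMI hc).
  by apply: inMID; first apply: inMIB; [exact: inMIMl | apply: inMI_sum => q; exact: inMIZ |
    exact: inMIMr].
have eC : Core = \sum_q sc hc i j q *: At' q - At' i *m At' j.
  have eSa q : Sa q = At' q - (At' q - Sa q) by rewrite opprB addrC subrK.
  apply: lift_identity; [exact: eSa | exact: eSa | exact: inMI_mul0 |].
  by rewrite (scP hc) -sumrB; apply: eq_bigr => l _; rewrite {1}eSa scalerBr.
rewrite eC in hM *; apply: (lift_inMI_inN hmo hred) => //.
apply: subalgB; [exact: hmo.1 | | exact: hmo.1.2.2.2].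
by apply: subalg_lincomb => //; exact: hmo.1.
Qed.

Lemma lift_coboundary (a : 'I_d -> 'M[R]_n) (Sa : 'I_d -> M) (Sq : 'I_d -> 'I_d -> M) f
    (At : M -> Prop) :
  choice_data pi A a Sa Sq -> is_c_of kap rho I A a Sa Sq f ->
  mold d At -> (forall x, A x <-> exists y, At y /\ x = map_mx pi y) ->
  coboundary2 kap I A0 f.
Proof.
move=> hc [hf hval] hmo hred; have ha := choice_basis hc.
have [At' hAt'] : exists At' : 'I_d -> M, forall j, At (At' j) /\ a j = map_mx pi (At' j).
  exact: (fun_choice (fun j => proj1 (hred (a j)) (ha.1 j))).
pose G j := At' j - Sa j.
have hG j : MI (G j).
  by apply/inMI_pi; rewrite map_mxB (choice_lift hc) -(hAt' j).2 subrr.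
have kAt' j : map_mx kap (At' j) = map_mx rho (a j) by rewrite map_kap_pi -(hAt' j).2.
apply: (coboundary_of_basis (g := lift_on_basis a G) (a := a)) => //.
- by move=> w hw; apply: cochain2_linl.
- by move=> w hw; apply: cochain2_linr.
- by split; [move=> x _; exact: (lift_on_basis_inMI a _ hG) | exact: linN_lift_on_basis].
move=> i j; rewrite /hoch1.
rewrite (inMI_mull_kap (X' := At' i) (Y := lift_on_basis a G _)) ?map_liftkK ?kAt' //;
  last exact (lift_on_basis_inMI a _ hG).
rewrite (inMI_mulr_kap (X' := At' j) (Y := lift_on_basis a G _)) ?map_liftkK ?kAt' //;
  last exact (lift_on_basis_inMI a _ hG).
rewrite !(lift_on_basis_basis _ ha hG).
apply: eqN_inN (lift_core_inN hc hmo hred (fun j => (hAt' j).1) (fun j => esym (hAt' j).2) i j).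
apply: eqN_B; first exact: hval.
apply: eqN_D (eqN_refl _); apply: eqN_B (eqN_refl _) _.
rewrite (residue_mul_basis hc).
apply: eqN_trans (linN_sum _ (linN_lift_on_basis ha hG) (A0_basis hc)) _.
by apply: eqN_sum => q; apply: eqN_eq; rewrite lift_on_basis_basis.
Qed.

(* If the span of a family is closed under products and contains a matrix E with
   E = 1 mod I, it contains 1 = E - (E E - E), because (E - 1)^2 = 0. *)
Lemma span_one m (s : 'I_m -> M) E :
  (forall Y Z, span s Y -> span s Z -> span s (Y *m Z)) ->
  span s E -> MI (E - 1%:M) -> span s 1%:M.
Proof.
move=> hmul hE hY; set Y := E - 1%:M in hY.
have eE : E = 1%:M + Y by rewrite /Y addrC subrK.
have eEE : E *m E - E = Y.
  by rewrite eE mulmxDl mul1mx mulmxDr mulmx1 (inMI_mul0 hY hY) addr0 addrC addKr.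
have -> : (1%:M : M) = E - (E *m E - E) by rewrite eEE eE addrK.
by apply: spanB => //; apply: spanB => //; apply: hmul.
Qed.

Lemma coboundary_lift_rearrange (V : zmodType) (SaSa Sg gS Sq Tg f gab : V) :
  SaSa + Sg + gS - (Sq + Tg) = ((f - (Sq - SaSa)) - (f - (Sg - gab + gS))) + (gab - Tg).
Proof.
rewrite !(opprD, opprB, opprK, addrA) [RHS](ACl (2*4*6*3*9*1*7*5*8)) /=.
by rewrite addrK subrK.
Qed.

(* Writing corrected lifts At = Sa + g with g in M_n(I) (so g g = 0). *)
Lemma coboundary_lift_identity (Ai Aj Sai Saj gi gj Sq TA Tg f gab : M) :
  Ai = Sai + gi -> Aj = Saj + gj -> gi *m gj = 0 -> TA = Sq + Tg ->
  Ai *m Aj - TA =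
  ((f - (Sq - Sai *m Saj)) - (f - (Sai *m gj - gab + gi *m Saj))) + (gab - Tg).
Proof.
move=> -> -> hg ->; rewrite mulmxDl !mulmxDr hg addr0.
exact: coboundary_lift_rearrange.
Qed.

Section CoboundaryLift.
Variables (a : 'I_d -> 'M[R]_n) (Sa : 'I_d -> M) (Sq : 'I_d -> 'I_d -> M)
  (f : 'M[k]_n -> 'M[k]_n -> M) (g : 'M[k]_n -> M).
Hypotheses (hc : choice_data pi A a Sa Sq) (hf : is_c_of kap rho I A a Sa Sq f)
  (hg : cochain1 kap I A0 g)
  (hdg : forall x y (X Y : M), A0 x -> A0 y -> map_mx kap X = x -> map_mx kap Y = y ->
     N (f x y - (X *m g y - g (x *m y) + g x *m Y))).

Definition At0 i : M := Sa i + g (map_mx rho (a i)).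

Lemma g_basis_inMI i : MI (g (map_mx rho (a i))).
Proof. exact: hg.1 _ (A0_basis hc i). Qed.

Lemma At0_lift i : map_mx pi (At0 i) = a i.
Proof. by rewrite map_mxD (choice_lift hc) (proj1 (inMI_pi _) (g_basis_inMI i)) addr0. Qed.

Lemma At0_kap i : map_mx kap (At0 i) = map_mx rho (a i).
Proof. by rewrite map_kap_pi At0_lift. Qed.

Lemma At0_mx_basis : mx_basis (catf At0 (fun j => map_mx liftR (b j))).
Proof.
apply: (lift_mx_basis (c' := catf a b)).
  exact: mold_mx_basis hA (choice_basis hc) hb_span hb_free.
by move=> i; rewrite /catf; case: (split i) => j; [exact: At0_lift | exact: map_liftRK].
Qed.

Lemma inN_span_At0 Y : N Y -> span At0 Y.
Proof.
move=> /(inN_Ispan (choice_basis hc) (choice_lift hc)) [u [hu ->]].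
by exists u; apply: eq_bigr => i _; apply: I_scale_kap => //; rewrite At0_kap (choice_kap hc).
Qed.

(* The key point: the corrected lifts multiply inside their span, because the
   defect of multiplicativity is c(a i, a j) - dg(a i, a j) = 0 mod N. *)
Lemma At0_mul i j : span At0 (At0 i *m At0 j).
Proof.
have hd : N (At0 i *m At0 j - \sum_p sc hc i j p *: At0 p).
  rewrite (@coboundary_lift_identity (At0 i) (At0 j) (Sa i) (Sa j) (g (map_mx rho (a i)))
     (g (map_mx rho (a j))) (Sq i j) (\sum_p sc hc i j p *: At0 p)
     (\sum_p sc hc i j p *: g (map_mx rho (a p)))
     (f (map_mx rho (a i)) (map_mx rho (a j)))
     (g (map_mx rho (a i) *m map_mx rho (a j)))) //.
  - apply: ND; first apply: NB.
    + exact: hf.2.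
    + by apply: hdg; rewrite ?(choice_kap hc) //; exact: (A0_basis hc).
    + rewrite {1}(residue_mul_basis hc).
      exact: (linN_sum _ hg.2 (A0_basis hc)).
  - exact: inMI_mul0 (g_basis_inMI i) (g_basis_inMI j).
  - by rewrite (scP hc) -big_split; apply: eq_bigr => p _; rewrite scalerDr.
rewrite -(subrK (\sum_p sc hc i j p *: At0 p) (At0 i *m At0 j)).
apply: spanD; first exact: inN_span_At0.
by apply: span_sum => p; apply: spanZ; apply: span_base.
Qed.

Lemma span_At0_mul Y Z : span At0 Y -> span At0 Z -> span At0 (Y *m Z).
Proof.
move=> [u ->] [v ->]; rewrite sum_scale_mul; apply: span_sum => i; apply: spanZ.
by apply: span_sum => j; apply: spanZ; apply: At0_mul.
Qed.

Lemma span_At0_one : span At0 1%:M.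
Proof.
have [r hr] := (choice_basis hc).2.1 _ hA.1.
apply: (span_one span_At0_mul (E := \sum_i liftR (r i) *: At0 i)).
  by exists (fun i => liftR (r i)).
apply/inMI_pi; rewrite map_mxB map_mx1 hr map_mx_sum; apply/eqP; rewrite subr_eq0; apply/eqP.
by apply: eq_bigr => i _; rewrite map_mxZ liftRK At0_lift.
Qed.

Lemma span_At0_mold : mold d (span At0).
Proof.
have [hbasis hquot] := mx_basis_catf_span At0_mx_basis.
split; last by split; [exists At0 |].
split; first exact: span_At0_one.
by split; [exact: spanD | split; [move=> r x; apply: spanZ | exact: span_At0_mul]].
Qed.

Lemma span_At0_reduces x : A x <-> exists y, span At0 y /\ x = map_mx pi y.
Proof.
split=> [hx|[y [[u ->] ->]]].
  have [r ->] := (choice_basis hc).2.1 _ hx.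
  exists (\sum_i liftR (r i) *: At0 i); split; first by exists (fun i => liftR (r i)).
  by rewrite map_mx_sum; apply: eq_bigr => i _; rewrite map_mxZ liftRK At0_lift.
rewrite map_mx_sum; under eq_bigr do rewrite map_mxZ At0_lift.
by apply: subalg_lincomb => //; apply: (choice_basis hc).1.
Qed.

End CoboundaryLift.

End Deformation.

Theorem proposition3p12 (Rt R : comPzRingType) (k : fieldType)
    (kap : {rmorphism Rt -> k}) (pi : {rmorphism Rt -> R}) (rho : {rmorphism R -> k})
    (I : Rt -> Prop) (n d : nat) (A : 'M[R]_n -> Prop) :
  (* (Rt, m = ker kap, k) is an Artin local ring *)
  artinian Rt ->
  (forall y : k, exists x, kap x = y) ->
  (forall x : Rt, kap x != 0 -> exists y, x * y = 1) ->
  (* I is an ideal with m I = 0 *)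
  is_ideal I ->
  (forall x y, kap x = 0 -> I y -> x * y = 0) ->
  (* R = Rt / I, with its R-algebra structure on k *)
  (forall y : R, exists x, pi x = y) ->
  (forall x, pi x = 0 <-> I x) ->
  (forall x, rho (pi x) = kap x) ->
  (* A is a rank d mold over R *)
  mold d A ->
  (* c is well defined (a k-linear map A0 (x) A0 -> M with the prescribed values) *)
  (forall (a : 'I_d -> 'M[R]_n) Sa Sp, choice_data pi A a Sa Sp ->
     exists f, is_c_of kap rho I A a Sa Sp f) /\
  (* c is a Hochschild 2-cocycle *)
  (forall (a : 'I_d -> 'M[R]_n) Sa Sp f, choice_data pi A a Sa Sp -> is_c_of kap rho I A a Sa Sp f ->
     cocycle2 kap I (A0_of rho A) f) /\
  (* [c] does not depend on the choices *)
  (forall (a : 'I_d -> 'M[R]_n) Sa Sp f (a' : 'I_d -> 'M[R]_n) Sa' Sp' f',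
     choice_data pi A a Sa Sp -> is_c_of kap rho I A a Sa Sp f ->
     choice_data pi A a' Sa' Sp' -> is_c_of kap rho I A a' Sa' Sp' f' ->
     coboundary2 kap I (A0_of rho A) (fun x y => f x y - f' x y)) /\
  (* a lift of A to a rank d mold over Rt exists iff [c] = 0 *)
  (forall (a : 'I_d -> 'M[R]_n) Sa Sp f, choice_data pi A a Sa Sp -> is_c_of kap rho I A a Sa Sp f ->
     ((exists At : 'M[Rt]_n -> Prop, mold d At /\
         forall x, A x <-> exists y, At y /\ x = map_mx pi y)
      <-> coboundary2 kap I (A0_of rho A) f)).
Proof.
move=> _ ksurj _ hI mI0 psurj ker_pi rho_pi [hA [[a0 ha0] [e [b [hb_span hb_free]]]]].
split; [|split; [|split]].
- move=> a Sa Sq hc; exists (c_of rho ksurj b a Sa Sq).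
  exact: (c_of_is_c ksurj hI mI0 psurj ker_pi rho_pi hA ha0 hb_span hb_free hc).
- move=> a Sa Sq f hc hf.
  exact: (c_cocycle ksurj hI mI0 psurj ker_pi rho_pi hA ha0 hc hf).
- move=> a Sa Sq f a' Sa' Sq' f' hc hf hc' hf'.
  exact: (c_change ksurj hI mI0 psurj ker_pi rho_pi hA ha0 hb_span hb_free hc hc' hf hf').
move=> a Sa Sq f hc hf; split=> [[At [hAt hred]]|[g [hg hdg]]].
  exact: (lift_coboundary ksurj hI mI0 psurj ker_pi rho_pi hA ha0 hb_span hb_free
    hc hf hAt hred).
exists (span (At0 rho a Sa g)); split.
  exact: (span_At0_mold ksurj hI mI0 psurj ker_pi rho_pi hA ha0 hb_span hb_free hc hf hg hdg).
exact: (span_At0_reduces psurj ker_pi hA hc hg).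
Qed.
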